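(* Consider the following constrained Bayesian persuasion setting. There is a finite state space $\Theta$, a finite action space $A=\{a_1,\dots,a_m\}$, a finite signal space $\Sigma$ with $|\Sigma|\ge |A|$, a common prior $\mu\in\Delta(\Theta)$, a sender utility $u_S:\Theta\times A\to\mathbb{R}$ and a receiver utility $u_R:\Theta\times A\to\mathbb{R}$. For each action $a_i$ there are bounds $0\le \ell_{a_i}\le h_{a_i}\le 1$, and these constraints are implementable, i.e. $\sum_i \ell_{a_i}\le 1\le \sum_i h_{a_i}$. Then for every signaling scheme $\hat\varphi:\Theta\to\Delta(\Sigma)$ there exists a signaling scheme $\varphi:\Theta\to\Delta(\Sigma)$ such that the sender's expected utility under $\varphi$ (against the receiver's constrained best response) is at least his expected utility under $\hat\varphi$ (against the receiver's constrained best response), and such that the receiver's constrained best response to $\varphi$ is deterministic (each signal is mapped to a single action with probability one). In particular, there exists a sender-optimal signaling scheme under which the receiver responds deterministically.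
   Context: A signaling scheme $\varphi:\Theta\to\Delta(\Sigma)$ is committed to by the sender before observing the state $\theta\sim\mu$; after observing $\theta$ the sender sends a signal $\sigma\sim\varphi(\theta)$. Write $\varphi(\sigma_j\mid\theta_i)$ for the probability of sending $\sigma_j$ in state $\theta_i$ and $\varphi(\sigma_j)=\sum_i\mu(\theta_i)\varphi(\sigma_j\mid\theta_i)$. A receiver strategy is a randomized mapping $\pi:\Sigma\to\Delta(A)$; write $\pi_{i j}$ for the probability that the receiver plays $a_i$ upon observing $\sigma_j$. The receiver is constrained: her strategy must satisfy, for every action $a_i$, $\ell_{a_i}\le \sum_j \varphi(\sigma_j)\,\pi_{ij}\le h_{a_i}$ (the probability of playing $a_i$, over the randomness of the state, the sender and the receiver, lies in $[\ell_{a_i},h_{a_i}]$). The receiver's (constrained) best response to $\varphi$ is a strategy satisfying these constraints that maximizes her expected utility $\mathbb{E}[u_R(\theta,a)]$ among all strategies satisfying the constraints, with ties broken in favor of the sender. The sender's expected utility under $\varphi$ is $\mathbb{E}_{\theta\sim\mu,\sigma\sim\varphi(\theta),a\sim\pi(\sigma)}[u_S(\theta,a)]$ with $\pi$ the receiver's best response; a sender-optimal scheme maximizes this quantity. *)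

From mathcomp Require Import all_boot all_order all_algebra.
From mathcomp Require Import reals.
Set Implicit Arguments. Unset Strict Implicit. Unset Printing Implicit Defensive.
Import Order.TTheory GRing.Theory Num.Theory.
Local Open Scope ring_scope.

Section Persuasion.
Variables (R : realType) (Theta A Sigma : finType).

Definition is_distr (T : finType) (p : T -> R) : Prop :=
  (forall t, 0 <= p t) /\ \sum_(t : T) p t = 1.

(* signaling scheme phi : Theta -> Delta(Sigma); phi th s = phi(s | th) *)
Definition is_scheme (phi : Theta -> Sigma -> R) : Prop :=
  forall th, is_distr (phi th).

Definition is_strategy (pi : Sigma -> A -> R) : Prop :=
  forall s, is_distr (pi s).

Definition sig_prob (mu : Theta -> R) (phi : Theta -> Sigma -> R) (s : Sigma) : R :=
  \sum_(th : Theta) mu th * phi th s.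

Definition feasible (mu : Theta -> R) (l h : A -> R)
    (phi : Theta -> Sigma -> R) (pi : Sigma -> A -> R) : Prop :=
  is_strategy pi /\
  forall a, l a <= \sum_(s : Sigma) sig_prob mu phi s * pi s a <= h a.

Definition exp_util (mu : Theta -> R) (u : Theta -> A -> R)
    (phi : Theta -> Sigma -> R) (pi : Sigma -> A -> R) : R :=
  \sum_(th : Theta) \sum_(s : Sigma) \sum_(a : A)
     mu th * phi th s * pi s a * u th a.

(* constrained best response, ties broken in favour of the sender *)
Definition best_response (mu : Theta -> R) (uS uR : Theta -> A -> R) (l h : A -> R)
    (phi : Theta -> Sigma -> R) (pi : Sigma -> A -> R) : Prop :=
  feasible mu l h phi pi /\
  (forall pi', feasible mu l h phi pi' ->
     exp_util mu uR phi pi' <= exp_util mu uR phi pi) /\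
  (forall pi', feasible mu l h phi pi' ->
     exp_util mu uR phi pi' = exp_util mu uR phi pi ->
     exp_util mu uS phi pi' <= exp_util mu uS phi pi).

Definition deterministic (pi : Sigma -> A -> R) : Prop :=
  forall s, exists a, forall a', pi s a' = (a' == a)%:R.

End Persuasion.

(** Revelation principle.  Let the new scheme send the recommendation
    "play b", encoded by the signal [f b] for an injection [f : A -> Sigma],
    with the probability that [phihat] followed by [pihat] ends in [b].  A
    receiver strategy [pi'] against it is reproduced against [phihat] by the
    garbling "draw b from [pihat], then play [pi'] on [f b]", with the same
    action marginals and the same expected utilities for both players.  Hence
    the constraints and both optimality conditions transfer back, and obeying
    the recommendation, whose garbling is [pihat] itself, is a deterministic
    constrained best response giving the sender his former utility. *)

From mathcomp Require Import all_boot all_order all_algebra.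
From mathcomp Require Import reals.
From Stdlib Require Import FunctionalExtensionality.
From mathcomp Require Import ring.
Set Implicit Arguments. Unset Strict Implicit. Unset Printing Implicit Defensive.
Import Order.TTheory GRing.Theory Num.Theory.
Local Open Scope ring_scope.

Lemma is_distr_card_gt0 (R : realType) (T : finType) (p : T -> R) :
  is_distr p -> (0 < #|T|)%N.
Proof.
move=> [_ p1]; rewrite lt0n; apply/negP => /eqP/card0_eq T0.
by move: p1; rewrite big_pred0 // => /eqP; rewrite eq_sym oner_eq0.
Qed.

Lemma leq_card_cancel (T U : finType) (t0 : T) :
  (#|T| <= #|U|)%N -> exists f : T -> U, exists g : U -> T, cancel f g.
Proof.
move=> leTU; pose f t := enum_val (widen_ord leTU (enum_rank t)).
have f_inj : injective f.
  by move=> x y /enum_val_inj/(congr1 val)/= /val_inj/enum_rank_inj.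
exists f, (fun u => odflt t0 [pick t | f t == u]) => t.
by case: pickP => [t' /eqP/f_inj // | /(_ t)]; rewrite eqxx.
Qed.

Section Recommendation.
Variables (R : realType) (Theta A Sigma : finType).
Variables (mu : Theta -> R) (phihat : Theta -> Sigma -> R).
Variables (pihat : Sigma -> A -> R) (f : A -> Sigma).

Definition recommend (th : Theta) (s : Sigma) : R :=
  \sum_(b : A) (f b == s)%:R * \sum_(s' : Sigma) phihat th s' * pihat s' b.

Definition garble (pi : Sigma -> A -> R) (s' : Sigma) (a : A) : R :=
  \sum_(b : A) pihat s' b * pi (f b) a.

Lemma sum_recommend th (Z : Sigma -> R) :
  \sum_s recommend th s * Z s =
  \sum_s' phihat th s' * \sum_b pihat s' b * Z (f b).
Proof.
transitivity (\sum_b (\sum_s' phihat th s' * pihat s' b) * Z (f b)).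
  rewrite /recommend; under eq_bigr do rewrite mulr_suml.
  rewrite exchange_big; apply: eq_bigr => b _.
  rewrite (bigD1 (f b)) //= eqxx mul1r [X in _ + X]big1 ?addr0 // => s.
  by rewrite eq_sym => /negbTE ->; rewrite !mul0r.
under eq_bigr do rewrite mulr_suml.
rewrite exchange_big; apply: eq_bigr => s' _; rewrite mulr_sumr.
by apply: eq_bigr => b _; rewrite mulrA.
Qed.

Lemma exp_util_recommend u pi :
  exp_util mu u recommend pi = exp_util mu u phihat (garble pi).
Proof.
rewrite /exp_util; apply: eq_bigr => th _.
transitivity (\sum_s recommend th s * \sum_a mu th * pi s a * u th a).
  apply: eq_bigr => s _; rewrite mulr_sumr; apply: eq_bigr => a _; ring.
rewrite sum_recommend; apply: eq_bigr => s' _.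
rewrite /garble mulr_sumr; under [RHS]eq_bigr do rewrite mulr_sumr mulr_suml.
rewrite [RHS]exchange_big; apply: eq_bigr => b _.
rewrite !mulr_sumr; apply: eq_bigr => a _; ring.
Qed.

Lemma action_prob_recommend pi a :
  \sum_s sig_prob mu recommend s * pi s a =
  \sum_s' sig_prob mu phihat s' * garble pi s' a.
Proof.
rewrite /sig_prob; under eq_bigr do rewrite mulr_suml.
under [RHS]eq_bigr do rewrite mulr_suml.
rewrite exchange_big [RHS]exchange_big; apply: eq_bigr => th _.
transitivity (mu th * \sum_s recommend th s * pi s a).
  by rewrite mulr_sumr; apply: eq_bigr => s _; rewrite mulrA.
by rewrite sum_recommend mulr_sumr; apply: eq_bigr => s' _; rewrite mulrA.
Qed.

Hypothesis pihat_strategy : is_strategy pihat.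

Lemma recommend_scheme : is_scheme phihat -> is_scheme recommend.
Proof.
move=> phihat_scheme th; split.
  move=> s; apply: sumr_ge0 => b _; rewrite mulr_ge0 ?ler0n //.
  apply: sumr_ge0 => s' _; apply: mulr_ge0; [exact: (phihat_scheme th).1 |].
  exact: (pihat_strategy s').1.
rewrite -(phihat_scheme th).2.
under eq_bigr do rewrite -[recommend th _]mulr1.
rewrite (sum_recommend th (fun=> 1)); apply: eq_bigr => s' _.
by under eq_bigr do rewrite mulr1; rewrite (pihat_strategy s').2 mulr1.
Qed.

Lemma garble_strategy pi : is_strategy pi -> is_strategy (garble pi).
Proof.
move=> pi_strategy s'; split.
  move=> a; apply: sumr_ge0 => b _.
  by apply: mulr_ge0; [exact: (pihat_strategy s').1 | exact: (pi_strategy _).1].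
rewrite exchange_big -(pihat_strategy s').2; apply: eq_bigr => b _.
by rewrite -mulr_sumr (pi_strategy (f b)).2 mulr1.
Qed.

Lemma feasible_garble l h pi :
  feasible mu l h recommend pi -> feasible mu l h phihat (garble pi).
Proof.
move=> [pi_strategy pi_bounds]; split=> [|a]; first exact: garble_strategy.
by rewrite -action_prob_recommend; exact: pi_bounds.
Qed.

Variable g : Sigma -> A.
Hypothesis fK : cancel f g.

Definition obey (s : Sigma) (a : A) : R := (a == g s)%:R.

Lemma obey_deterministic : deterministic obey.
Proof. by move=> s; exists (g s). Qed.

Lemma obey_strategy : is_strategy obey.
Proof.
move=> s; split=> [a|]; first exact: ler0n.
by rewrite /obey (bigD1 (g s)) //= eqxx big1 ?addr0 // => a /negbTE ->.
Qed.

Lemma garble_obey : garble obey = pihat.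
Proof.
apply: functional_extensionality => s'; apply: functional_extensionality => a.
rewrite /garble /obey (bigD1 a) //= fK eqxx mulr1 big1 ?addr0 // => b.
by rewrite fK eq_sym => /negbTE ->; rewrite mulr0.
Qed.

Lemma best_response_obey uS uR l h :
  best_response mu uS uR l h phihat pihat ->
  best_response mu uS uR l h recommend obey.
Proof.
move=> [[_ pihat_bounds] [pihat_optR pihat_optS]].
split; [split=> [|a] | split=> pi /feasible_garble pi_feasible].
- exact: obey_strategy.
- by rewrite action_prob_recommend garble_obey; exact: pihat_bounds.
- by rewrite !exp_util_recommend garble_obey; exact: pihat_optR.
- by rewrite !exp_util_recommend garble_obey; exact: pihat_optS.
Qed.

End Recommendation.

Theorem proposition1 (R : realType) (Theta A Sigma : finType)
    (mu : Theta -> R) (uS uR : Theta -> A -> R) (l h : A -> R) :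
  (#|A| <= #|Sigma|)%N ->
  is_distr mu ->
  (forall a, 0 <= l a /\ l a <= h a /\ h a <= 1) ->
  \sum_(a : A) l a <= 1 -> 1 <= \sum_(a : A) h a ->
  forall (phihat : Theta -> Sigma -> R) (pihat : Sigma -> A -> R),
    is_scheme phihat ->
    best_response mu uS uR l h phihat pihat ->
    exists (phi : Theta -> Sigma -> R) (pi : Sigma -> A -> R),
      [/\ is_scheme phi,
          best_response mu uS uR l h phi pi,
          deterministic pi &
          exp_util mu uS phihat pihat <= exp_util mu uS phi pi].
Proof.
move=> leAS mu_distr _ _ _ phihat pihat phihat_scheme pihat_br.
have [[pihat_strategy _] _] := pihat_br.
have /card_gt0P[th _] := is_distr_card_gt0 mu_distr.
have /card_gt0P[s _] := is_distr_card_gt0 (phihat_scheme th).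
have /card_gt0P[a0 _] := is_distr_card_gt0 (pihat_strategy s).
have [f [g fK]] := leq_card_cancel a0 leAS.
exists (recommend phihat pihat f), (obey _ g); split.
- exact: recommend_scheme.
- exact: best_response_obey.
- exact: obey_deterministic.
- by rewrite exp_util_recommend garble_obey.
Qed.
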